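(* Consider the model in the context with $\gamma<0$, and let $s,t\in\mathcal{T}$ with $t\geq s+2$ and $t+1\le T$. Under Assumption A, for both $\tau=s$ and $\tau=t$: \[ P(y_{\tau}=1\mid w^{T},y_{s-1}=y_{t-1},y_{s+1}=y_{t+1}=1,\alpha)=F_{\epsilon|\alpha}(w_{\tau}+\gamma y_{\tau-1}+\alpha)\,P(E_{\tau+1,1}\mid w^{T},y_{s-1}=y_{t-1},y_{s+1}=y_{t+1}=1,\alpha), \] and \[ P(y_{\tau}=1\mid w^{T},y_{s-1}=y_{t-1},y_{s+1}=y_{t+1}=0,\alpha)=P(E_{\tau+1,2}\mid w^{T},y_{s-1}=y_{t-1},y_{s+1}=y_{t+1}=0,\alpha)+F_{\epsilon|\alpha}(w_{\tau}+\gamma y_{\tau-1}+\alpha)\,P(E_{\tau+1,3}\mid w^{T},y_{s-1}=y_{t-1},y_{s+1}=y_{t+1}=0,\alpha), \] where on the right-hand sides $y_{\tau-1}$ denotes its (common) conditioned value.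
   Context: Model: $y_0\in\{0,1\}$ observed and, for $t\in\mathcal{T}=\{1,\dots,T\}$, $y_{t}=1[x_{t}^{\prime}\beta+\gamma y_{t-1}+\alpha-\epsilon_{t}>0]$, $x_t\in\mathbb{R}^K$ observed, $\alpha$ an unobserved individual effect, $\epsilon_t$ unobserved errors. $w_t=x_t'\beta$, $w^T=(w_1,\dots,w_T)$. For each $t$, define the partition $E_{t,1}=\{\epsilon_t<w_t+\gamma+\alpha\}$, $E_{t,2}=\{w_t+\gamma+\alpha\le\epsilon_t<w_t+\alpha\}$, $E_{t,3}=\{\epsilon_t\ge w_t+\alpha\}$. Assumption A: for all $\alpha$ and $s,t\in\mathcal{T}$: (a)(i) $\epsilon^T\perp(x^T,y_0)\mid\alpha$, (ii) $\epsilon_s\perp\epsilon_t\mid\alpha$ ($s\ne t$), (iii) $\epsilon_s\overset{d}{=}\epsilon_t\mid\alpha$, with common CDF $F_{\epsilon|\alpha}$; (b) $F_{\epsilon|\alpha}$ absolutely continuous with support $\mathbb{R}$; (c) $x_{ts,1}$ (first component of $x_t-x_s$) has a.e. positive density on $\mathbb{R}$ given the remaining components and $\alpha$, and $\beta_1\ne0$; (d) the support of $x_t-x_s$ given $\alpha$ is not in a proper linear subspace of $\mathbb{R}^K$; (e) $\|\beta\|_2=1$, $\gamma$ in the interior of a compact $\mathcal{R}\subset\mathbb{R}$. *)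

From HB Require Import structures.
From mathcomp Require Import all_boot all_order all_algebra.
From mathcomp Require Import all_classical all_reals all_analysis.
Set Implicit Arguments. Unset Strict Implicit. Unset Printing Implicit Defensive.
Import Order.TTheory GRing.Theory Num.Theory.
Local Open Scope classical_set_scope.
Local Open Scope ring_scope.

Section DynBinary.
Context {R : realType}.

(* mutual independence of a finite family of real random variables:
   product rule for every family of Borel sets (taking B i = setT for the
   indices not in a subfamily gives the product rule for every subfamily). *)
Definition mutually_independent {d} {Omega : measurableType d}
  (P : probability Omega R) (n : nat) (X : 'I_n -> Omega -> R) : Prop :=
  forall B : 'I_n -> set R, (forall i, measurable (B i)) ->
    P (\bigcap_(i in [set: 'I_n]) (X i @^-1` B i)) =
    (\prod_(i < n) P (X i @^-1` B i))%E.

Definition abs_cont_cdf (F : R -> R) : Prop :=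
  exists f : R -> R, (forall u, 0 <= f u) /\ measurable_fun setT f /\
    forall c, (F c)%:E = (\int[lebesgue_measure]_(u in `]-oo, c]) (f u)%:E)%E.

Definition full_support_cdf (F : R -> R) : Prop :=
  forall a b, a < b -> F a < F b.

Definition index_w (K : nat) (x : nat -> 'I_K -> R) (beta : 'I_K -> R) (t : nat) : R :=
  \sum_(i < K) x t i * beta i.

Fixpoint ydyn {Omega : Type} (w : nat -> R) (gamma alpha : R)
  (eps : nat -> Omega -> R) (y0 : Omega -> bool) (t : nat) (om : Omega) : bool :=
  match t with
  | 0 => y0 om
  | t'.+1 => 0 < w t + gamma * (ydyn w gamma alpha eps y0 t' om)%:R + alpha - eps t om
  end.

Definition E1 {Omega : Type} (w : nat -> R) (gamma alpha : R) (eps : nat -> Omega -> R) t :=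
  [set om | eps t om < w t + gamma + alpha].
Definition E2 {Omega : Type} (w : nat -> R) (gamma alpha : R) (eps : nat -> Omega -> R) t :=
  [set om | w t + gamma + alpha <= eps t om /\ eps t om < w t + alpha].
Definition E3 {Omega : Type} (w : nat -> R) (gamma alpha : R) (eps : nat -> Omega -> R) t :=
  [set om | w t + alpha <= eps t om].

(* elementary conditional probability P(A | C) = P(A /\ C) / P(C)
   (with the convention x / 0 = 0) *)
Definition condP {d} {Omega : measurableType d} (P : probability Omega R)
  (A C : set Omega) : R := fine (P (A `&` C)) / fine (P C).

End DynBinary.

(* Write tau = k+1.  Because gamma < 0, on {y_{k+2} = 1} the event {y_{k+1} = 1}
   is E_{k+2,1} intersected with {eps_{k+1} < w_{k+1} + gamma y_k + alpha}; on
   {y_{k+2} = 0} it is E_{k+2,2}, together with E_{k+2,3} intersected with the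
   same threshold event.  Restarting the dynamics at time k+2 shows that on
   {y_{k+2} = b} the conditioning event coincides with an event generated by y_0
   and the eps_i, i <> k+1.  Such events are independent of eps_{k+1}, and
   P(eps_{k+1} < c) = F(c) because F has a density. *)

From HB Require Import structures.
From mathcomp Require Import all_boot all_order all_algebra.
From mathcomp Require Import all_classical all_reals all_analysis.
From mathcomp Require Import measurable_realfun zify.
Set Implicit Arguments.
Unset Strict Implicit.
Unset Printing Implicit Defensive.
Import Order.TTheory GRing.Theory Num.Theory.
Local Open Scope classical_set_scope.
Local Open Scope ring_scope.

Section independence.
Context {R : realType} {d : measure_display} {Omega : measurableType d}
  (P : probability Omega R) (n : nat) (Z : 'I_n -> Omega -> R).
Hypothesis mZ : forall i, measurable_fun setT (Z i).
Hypothesis indepZ : mutually_independent P Z.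
Variable j : 'I_n.

Lemma measurable_preimageZ i B : measurable B -> measurable (Z i @^-1` B).
Proof. by move=> mB; rewrite -[_ @^-1` _]setTI; exact: mZ. Qed.

Definition rect_except : set (set Omega) :=
  [set A | exists2 B : 'I_n -> set R, (forall i, measurable (B i)) /\ B j = setT &
     A = \bigcap_(i in [set: 'I_n]) (Z i @^-1` B i)].

Lemma rect_except_measurable : rect_except `<=` measurable.
Proof.
move=> _ [B [mB _] ->]; apply: fin_bigcap_measurable; first exact: finite_finset.
by move=> i _; exact: measurable_preimageZ.
Qed.

Lemma rect_except_setI : setI_closed rect_except.
Proof.
move=> _ _ [B [mB Bj] ->] [B' [mB' B'j] ->].
exists (fun i => B i `&` B' i).
  by split; [move=> i; exact: measurableI|rewrite Bj B'j setIT].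
by rewrite -bigcapI; apply: eq_bigcapr => i _; rewrite preimage_setI.
Qed.

Lemma rect_except_preimage i B : i != j -> measurable B ->
  rect_except (Z i @^-1` B).
Proof.
move=> ij mB; exists (fun m => if m == i then B else setT).
  by split; [move=> m; case: ifP|rewrite eq_sym (negbTE ij)].
apply/seteqP; split=> [om Bom m _|om /(_ i I)]; last by rewrite eqxx.
by case: eqP => [->|].
Qed.

Lemma sigma_rect_except_measurable : <<s rect_except >> `<=` measurable.
Proof.
exact: smallest_sub (@sigma_algebra_measurable _ Omega) rect_except_measurable.
Qed.

Lemma rect_except_indep A X : measurable X -> rect_except A ->
  P (A `&` Z j @^-1` X) = (P A * P (Z j @^-1` X))%E.
Proof.
move=> mX [B [mB Bj] ->]; pose B' i := if i == j then X else B i.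
have -> : \bigcap_(i in [set: 'I_n]) (Z i @^-1` B i) `&` Z j @^-1` X =
    \bigcap_(i in [set: 'I_n]) (Z i @^-1` B' i).
  apply/seteqP; split=> [om [HB HX] i _|om HB']; rewrite /B'.
    by case: eqP => [->|_] //; exact: HB.
  split; last by have := HB' j I; rewrite /B' eqxx.
  by move=> i _; have := HB' i I; rewrite /B'; case: eqP => [->|]; rewrite ?Bj.
rewrite !indepZ //; last by move=> i; rewrite /B'; case: eqP.
rewrite (bigD1 j) //= (bigD1 j (F := fun i => P (Z i @^-1` B i))) //=.
rewrite /B' eqxx Bj preimage_setT probability_setT mul1e [RHS]muleC.
by congr (_ * _)%E; apply: eq_bigr => i /negbTE ->.
Qed.

(* A |-> P (A `&` Z j @^-1` X) and A |-> P A * P (Z j @^-1` X) are finite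
   measures agreeing on the pi-system rect_except. *)
Lemma indep_rect_except A X : measurable X -> <<s rect_except >> A ->
  P (A `&` Z j @^-1` X) = (P A * P (Z j @^-1` X))%E.
Proof.
move=> mX GA; have mZX := measurable_preimageZ j mX.
have PZX_ge0 : 0 <= fine (P (Z j @^-1` X)) by apply: fine_ge0.
rewrite muleC -[P (Z j @^-1` X)]fineK ?fin_num_measure //.
suff : mrestr P mZX A = mscale (NngNum PZX_ge0) P A by [].
have /(_ R _ _ (mrestr P mZX) (mscale (NngNum PZX_ge0) P)) uniq :=
  @g_sigma_algebra_measure_unique_trace _ _ _ rect_except setT measurableT.
apply: uniq.
- by move=> B [/rect_except_measurable].
- by move=> ? ? [GB _] [GC _]; split; [exact: rect_except_setI|].
- rewrite /= /mrestr /mscale /= setTI probability_setT mule1.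
  by rewrite fineK ?fin_num_measure.
- move=> B [RB _]; rewrite /= /mrestr /mscale /= fineK ?fin_num_measure //.
  by rewrite muleC; exact: rect_except_indep.
- by rewrite /= /mrestr setTI ltey_eq fin_num_measure.
- by [].
- by apply: sub_sigma_algebra2 GA => B GB.
Qed.

End independence.

Lemma itvNyo_bigcup {R : realType} (c : R) :
  `]-oo, c[%classic = \bigcup_n `]-oo, c - n.+1%:R^-1]%classic.
Proof.
apply/seteqP; split => [x|x [n _]]; rewrite /= !in_itv /=; last first.
  by move/le_lt_trans; apply; rewrite ltrBlDr ltrDl invr_gt0 ltr0n.
move=> xc; exists (Num.truncn (c - x)^-1) => //=; rewrite in_itv /=.
rewrite lerBrDl addrC -lerBrDl -[leRHS]invrK.
by rewrite lef_pV2 ?posrE ?ltr0n ?invr_gt0 ?subr_gt0 // ltW // truncnS_gt.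
Qed.

Section abs_cont_cdf.
Context {R : realType} {d : measure_display} {Omega : measurableType d}
  (P : probability Omega R) (X : Omega -> R) (F : R -> R).
Hypothesis mX : measurable_fun setT X.
Hypothesis cdfX : forall c, P (X @^-1` `]-oo, c]) = (F c)%:E.
Hypothesis acF : abs_cont_cdf F.

Lemma abs_cont_cdf_lt c : P (X @^-1` `]-oo, c[) = (F c)%:E.
Proof.
have [f [f0 [mf Ff]]] := acF.
have mfE := (measurable_EFinP setT f).2 mf.
pose I n := `]-oo, c - n.+1%:R^-1]%classic.
have mI n : measurable (I n) by exact: measurable_itv.
have ndI : nondecreasing_seq I.
  move=> m n mn; apply/subsetPset/subset_itvl; rewrite bnd_simp lerD2l lerN2.
  by rewrite lef_pV2 ?posrE // ler_nat.
have PI : P (X @^-1` I n) @[n --> \oo] --> P (X @^-1` `]-oo, c[).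
  rewrite itvNyo_bigcup preimage_bigcup; apply: nondecreasing_cvg_mu.
  - by move=> n; rewrite -[_ @^-1` _]setTI; exact: mX.
  - by apply: bigcup_measurable => n _; rewrite -[_ @^-1` _]setTI; exact: mX.
  - move=> m n mn; apply/subsetPset; apply: preimage_subset.
    exact/subsetPset/ndI.
have intI : (\int[lebesgue_measure]_(u in I n) (f u)%:E)%E @[n --> \oo] -->
    (\int[lebesgue_measure]_(u in `]-oo, c[) (f u)%:E)%E.
  rewrite itvNyo_bigcup; apply: ge0_nondecreasing_set_cvg_integral => //.
  - by move=> n; exact: measurable_funS mfE.
  - by move=> n u _; rewrite lee_fin.
rewrite Ff -integral_itv_bndo_bndc; last exact: measurable_funS mfE.
apply: cvg_unique PI _; first exact: ereal_hausdorff.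
rewrite /mkset; under eq_fun do rewrite /I cdfX Ff.
exact: intI.
Qed.

End abs_cont_cdf.

Section dynamics.
Context {R : realType} {Omega : Type} (w : nat -> R) (gamma alpha : R)
  (eps : nat -> Omega -> R) (y0 : Omega -> bool).
Local Notation y := (ydyn w gamma alpha eps y0).
Local Notation Y n b := [set om | y n om = b].

Definition ydyn_from (m : nat) (b : bool) :=
  ydyn (fun i => w (i + m)) gamma alpha (fun i => eps (i + m)) (fun _ => b).

Lemma ydyn_restart m om : forall i, y (m + i) om = ydyn_from m (y m om) i om.
Proof.
by elim=> [|i IH]; rewrite ?addn0 // addnS /= IH /ydyn_from /= addSn addnC.
Qed.

Lemma ydynS k om :
  y k.+1 om = (eps k.+1 om < w k.+1 + gamma * (y k om)%:R + alpha).
Proof. by rewrite /= subr_gt0. Qed.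

Lemma E1_ydyn k om : gamma < 0 -> E1 w gamma alpha eps k.+1 om -> y k.+1 om.
Proof.
move=> g0 E1om; rewrite ydynS (lt_le_trans E1om) // lerD2r lerD2l.
by case: (y k om); rewrite ?mulr1 ?mulr0 // ltW.
Qed.

Lemma E3_ydyn k om : gamma < 0 -> E3 w gamma alpha eps k.+1 om -> ~~ y k.+1 om.
Proof.
move=> g0 E3om; rewrite ydynS -leNgt (le_trans _ E3om) // lerD2r gerDl.
by case: (y k om); rewrite ?mulr1 ?mulr0 // ltW.
Qed.

Lemma E2_ydyn k om : E2 w gamma alpha eps k.+1 om -> y k.+1 om = ~~ y k om.
Proof.
rewrite ydynS => -[lo hi].
by case: (y k om); rewrite ?mulr1 ?mulr0 ?addr0 //= ltNge lo.
Qed.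

Lemma ydyn_E1 k om : y k om -> y k.+1 om -> E1 w gamma alpha eps k.+1 om.
Proof. by rewrite ydynS => ->; rewrite mulr1. Qed.

Lemma E1E t : E1 w gamma alpha eps t = eps t @^-1` `]-oo, w t + gamma + alpha[.
Proof. by apply/seteqP; split => om; rewrite /E1 /= in_itv. Qed.

Lemma E2E t :
  E2 w gamma alpha eps t = eps t @^-1` `[w t + gamma + alpha, w t + alpha[.
Proof. by apply/seteqP; split => om; rewrite /E2 /= in_itv /= => /andP. Qed.

Lemma E3E t : E3 w gamma alpha eps t = eps t @^-1` `[w t + alpha, +oo[.
Proof. by apply/seteqP; split => om; rewrite /E3 /= in_itv /= andbT. Qed.

Lemma E123_cases t om :
  [\/ E1 w gamma alpha eps t om, E2 w gamma alpha eps t om |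
      E3 w gamma alpha eps t om].
Proof.
rewrite /E1 /E2 /E3 /=; case: (ltP (eps t om) (w t + gamma + alpha)) => [|lo].
  by constructor 1.
by case: (ltP (eps t om) (w t + alpha)) => hi; [constructor 2|constructor 3].
Qed.

Lemma E2_E3_disj t om : E2 w gamma alpha eps t om -> ~ E3 w gamma alpha eps t om.
Proof. by move=> [_ lt] /(lt_le_trans lt); rewrite ltxx. Qed.

Lemma setI_ydyn_E1 k C : C `<=` Y k.+2 true ->
  Y k.+1 true `&` C = Y k.+1 true `&` (E1 w gamma alpha eps k.+2 `&` C).
Proof.
move=> CY2; apply/seteqP; split => [om [yk1 Com]|om [yk1 [_ Com]]]; split => //.
by split => //; exact: ydyn_E1 yk1 (CY2 om Com).
Qed.

Lemma setI_ydyn_E2E3 k C : gamma < 0 -> C `<=` Y k.+2 false ->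
  Y k.+1 true `&` C = (E2 w gamma alpha eps k.+2 `&` C) `|`
    (Y k.+1 true `&` (E3 w gamma alpha eps k.+2 `&` C)).
Proof.
move=> gamma_lt0 CY2; apply/seteqP; split => om.
  move=> [yk1 Com]; have yk2 : y k.+2 om = false := CY2 om Com.
  case: (E123_cases k.+2 om) => [E1om|E2om|E3om].
  - by move: yk2; rewrite (E1_ydyn gamma_lt0 E1om).
  - by left.
  - by right.
case=> [[E2om Com]|[yk1 [_ Com]]]; split => //.
by move: (E2_ydyn E2om); rewrite (CY2 om Com) => /esym/negbFE.
Qed.

End dynamics.

Lemma measurable_ydyn {R : realType} {d : measure_display} {M : measurableType d}
    (w : nat -> R) (gamma alpha : R) (eps : nat -> M -> R) (y0 : M -> bool) n b :
  measurable [set om | y0 om] ->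
  (forall i B, (1 <= i <= n)%N -> measurable B -> measurable (eps i @^-1` B)) ->
  measurable [set om | ydyn w gamma alpha eps y0 n om = b].
Proof.
have setbC (h : M -> bool) : [set om | h om = false] = ~` [set om | h om].
  by apply/seteqP; split => om /=; case: (h om).
move=> my0; elim: n b => [|n IH] b meps.
  by case: b; rewrite ?setbC; [|apply: measurableC]; exact: my0.
suff mS : measurable [set om | ydyn w gamma alpha eps y0 n.+1 om].
  by case: b; rewrite ?setbC; [|apply: measurableC]; exact: mS.
have -> : [set om | ydyn w gamma alpha eps y0 n.+1 om] =
  \bigcup_(v in [set: bool]) ([set om | ydyn w gamma alpha eps y0 n om = v] `&`
     eps n.+1 @^-1` `]-oo, w n.+1 + gamma * v%:R + alpha[).
  apply/seteqP; split => [om|om [v _ [<-]]] /=; rewrite ?in_itv /= subr_gt0 //.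
  by move=> hom; exists (ydyn w gamma alpha eps y0 n om); rewrite //= in_itv.
apply: fin_bigcup_measurable => [|v _]; first exact: finite_finset.
apply: measurableI.
  by apply: IH => i B /andP[i1 iN]; apply: meps; rewrite i1 ltnW.
by apply: meps; [rewrite /= leqnn|exact: measurable_itv].
Qed.

Section model.
Context {R : realType} {d : measure_display} {Omega : measurableType d}
  (P : probability Omega R) (T : nat) (w : nat -> R) (gamma alpha : R)
  (F : R -> R) (eps : nat -> Omega -> R) (y0 : Omega -> bool).
Hypothesis gamma_lt0 : gamma < 0.
Hypothesis my0 : measurable_fun setT y0.
Hypothesis meps : forall u, (1 <= u <= T)%N -> measurable_fun setT (eps u).
Let Z (i : 'I_T.+1) : Omega -> R :=
  if val i == 0%N then (fun om => (y0 om)%:R) else eps (val i).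
Hypothesis indepZ : mutually_independent P Z.
Hypothesis cdf_eps :
  forall u, (1 <= u <= T)%N -> forall c, P (eps u @^-1` `]-oo, c]) = (F c)%:E.
Hypothesis acF : abs_cont_cdf F.

Local Notation y := (ydyn w gamma alpha eps y0).
Local Notation Y n b := [set om | y n om = b].

Lemma measurable_eps_preimage u B : (1 <= u <= T)%N -> measurable B ->
  measurable (eps u @^-1` B).
Proof. by move=> uT mB; rewrite -[_ @^-1` _]setTI; exact: meps. Qed.

Lemma measurable_Z i : measurable_fun setT (Z i).
Proof.
rewrite /Z; case: eqP => [_|i0].
  have mnat : measurable_fun setT (fun b : bool => b%:R : R) by [].
  exact: measurableT_comp mnat my0.
apply: meps; rewrite lt0n -ltnS ltn_ord andbT; exact/eqP.
Qed.

Lemma measurable_Y n b : (n <= T)%N -> measurable (Y n b).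
Proof.
move=> nT; apply: measurable_ydyn => [|i B /andP[i1 iN] mB].
  by rewrite -[X in measurable X]setTI; exact: my0.
by apply: measurable_eps_preimage; rewrite // i1 (leq_trans iN).
Qed.

Section at_time.
Variable k : nat.
Hypothesis k2T : (k.+2 <= T)%N.
Let j : 'I_T.+1 := Ordinal (leqW k2T : (k.+1 < T.+1)%N).
(* the sigma-algebra generated by y_0 and the eps_i, i <> k+1 *)
Let G := <<s rect_except Z j >>.
Let M := g_sigma_algebraType (rect_except Z j).

Lemma G_measurable A : G A -> measurable A.
Proof. exact: (sigma_rect_except_measurable measurable_Z). Qed.

Lemma G_eps i B : (1 <= i <= T)%N -> i != k.+1 -> measurable B -> G (eps i @^-1` B).
Proof.
move=> /andP[i1 iT] ik mB; apply: sub_sigma_algebra.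
have Zi : Z (Ordinal (iT : (i < T.+1)%N)) = eps i.
  by rewrite /Z /=; case: eqP i1 => [->|].
by rewrite -Zi; apply: rect_except_preimage.
Qed.

Lemma G_y0 : G [set om | y0 om].
Proof.
have -> : [set om | y0 om] = Z ord0 @^-1` [set 1].
  apply/seteqP; split => om; rewrite /Z /=; case: (y0 om) => //.
  by move=> /esym/eqP; rewrite oner_eq0.
by apply: sub_sigma_algebra; apply: rect_except_preimage.
Qed.

Lemma G_Y n b : (n <= k)%N -> G (Y n b).
Proof.
move=> nk; apply: (@measurable_ydyn _ _ M) => [|i B /andP[i1 iN] mB].
  exact: G_y0.
by apply: G_eps => //; lia.
Qed.

Lemma G_ydyn_from b n v : (k.+2 + n <= T)%N ->
  G [set om | ydyn_from w gamma alpha eps k.+2 b n om = v].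
Proof.
move=> nT; rewrite /ydyn_from.
apply: (@measurable_ydyn _ _ M _ gamma alpha (fun i => eps (i + k.+2)) (fun=> b))
  => [|i B /andP[i1 iN] mB].
  have -> : [set om : M | b] = if b then setT else set0.
    by apply/seteqP; split => om; case: b.
  by case: b; [exact: (@measurableT _ M)|exact: (@measurable0 _ M)].
by apply: G_eps => //; lia.
Qed.

Lemma G_E1 : G (E1 w gamma alpha eps k.+2).
Proof. by rewrite E1E; apply: G_eps; rewrite ?measurable_itv //; lia. Qed.

Lemma G_E3 : G (E3 w gamma alpha eps k.+2).
Proof. by rewrite E3E; apply: G_eps; rewrite ?measurable_itv //; lia. Qed.

Definition G_trace S C := exists2 H, G H & C `&` S = H `&` S.

Lemma G_traceI S C1 C2 : G_trace S C1 -> G_trace S C2 -> G_trace S (C1 `&` C2).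
Proof.
move=> [H1 GH1 C1E] [H2 GH2 C2E]; exists (H1 `&` H2).
  exact: (@measurableI _ M).
by rewrite setIIl C1E C2E -setIIl.
Qed.

Lemma G_trace_Y b n v : n != k.+1 -> (n <= T)%N -> G_trace (Y k.+2 b) (Y n v).
Proof.
move=> nk nT; have [nk'|kn] := leqP n k; first by exists (Y n v) => //; exact: G_Y.
have {nk kn} kn : (k.+2 <= n)%N by lia.
exists [set om | ydyn_from w gamma alpha eps k.+2 b (n - k.+2) om = v].
  by apply: G_ydyn_from; rewrite subnKC.
have restart om :
    y n om = ydyn_from w gamma alpha eps k.+2 (y k.+2 om) (n - k.+2) om.
  by rewrite -ydyn_restart subnKC.
by apply/seteqP; split => om [h yk2]; split => //; move: h;
  rewrite /= restart yk2.
Qed.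

Lemma G_trace_cap b E C : E `<=` Y k.+2 b -> G E ->
  C `<=` Y k.+2 b -> G_trace (Y k.+2 b) C -> G (E `&` C).
Proof.
move=> EY GE CY [H GH CE].
rewrite -(setIidl CY) CE setICA (setIidl EY); exact: (@measurableI _ M).
Qed.

Lemma measurable_G_trace b C :
  G_trace (Y k.+2 b) C -> C `<=` Y k.+2 b -> measurable C.
Proof.
move=> [H GH CE] CY; rewrite -(setIidl CY) CE.
apply: measurableI; last exact: measurable_Y.
exact: G_measurable.
Qed.

Lemma prob_Y_true_G dv D : G D -> D `<=` Y k dv ->
  P (Y k.+1 true `&` D) = ((F (w k.+1 + gamma * dv%:R + alpha))%:E * P D)%E.
Proof.
move=> GD DY; have k1T : (1 <= k.+1 <= T)%N by lia.
have -> : Y k.+1 true `&` D =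
    D `&` Z j @^-1` `]-oo, w k.+1 + gamma * dv%:R + alpha[.
  by apply/seteqP; split => [om [h Dom]|om [Dom h]]; split => //; move: h;
    rewrite /Z /= ?in_itv /= subr_gt0 (DY om Dom).
rewrite (indep_rect_except measurable_Z indepZ) ?measurable_itv // muleC.
by congr (_ * _)%E; exact: abs_cont_cdf_lt (meps k1T) (cdf_eps k1T) acF _.
Qed.

Lemma condP_Y_E1 dv C : C `<=` Y k dv -> C `<=` Y k.+2 true ->
  G_trace (Y k.+2 true) C ->
  condP P (Y k.+1 true) C =
    F (w k.+1 + gamma * dv%:R + alpha) * condP P (E1 w gamma alpha eps k.+2) C.
Proof.
move=> CY CY2 trC; rewrite /condP.
have E1Y : E1 w gamma alpha eps k.+2 `<=` Y k.+2 true by move=> om; exact: E1_ydyn.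
have GE1C := G_trace_cap E1Y G_E1 CY2 trC.
rewrite setI_ydyn_E1 // (@prob_Y_true_G dv) //; last by move=> om [_ /CY].
by rewrite fineM ?fin_num_measure //= ?mulrA //; exact: G_measurable.
Qed.

Lemma condP_Y_E2E3 dv C : C `<=` Y k dv -> C `<=` Y k.+2 false ->
  G_trace (Y k.+2 false) C ->
  condP P (Y k.+1 true) C = condP P (E2 w gamma alpha eps k.+2) C +
    F (w k.+1 + gamma * dv%:R + alpha) * condP P (E3 w gamma alpha eps k.+2) C.
Proof.
move=> CY CY2 trC; rewrite /condP setI_ydyn_E2E3 //.
have E3Y : E3 w gamma alpha eps k.+2 `<=` Y k.+2 false.
  by move=> om E3om; apply/negbTE; exact: E3_ydyn.
have GE3C := G_trace_cap E3Y G_E3 CY2 trC.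
have mC := measurable_G_trace trC CY2.
set E2C := E2 w gamma alpha eps k.+2 `&` C.
set E3C := E3 w gamma alpha eps k.+2 `&` C.
have mE2C : measurable E2C.
  by apply: measurableI => //; rewrite E2E; apply: measurable_eps_preimage;
    rewrite ?measurable_itv //; lia.
have mYE3C : measurable (Y k.+1 true `&` E3C).
  by apply: measurableI; [exact: measurable_Y (ltnW k2T)|exact: G_measurable].
have disj : E2C `&` (Y k.+1 true `&` E3C) = set0.
  apply/seteqP; split => [om [[E2om _] [_ [E3om _]]]|//].
  exact: E2_E3_disj E2om E3om.
have -> : P (E2C `|` (Y k.+1 true `&` E3C)) = (P E2C + P (Y k.+1 true `&` E3C))%E.
  exact: measureU.
rewrite (@prob_Y_true_G dv) //; last by move=> om [_ /CY].
have mE3C := G_measurable GE3C.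
rewrite fineD ?fin_num_measure //; last by rewrite fin_numM ?fin_num_measure.
by rewrite fineM ?fin_num_measure //= mulrDl mulrA.
Qed.

Lemma neighbours_trace s t dv b :
  (0 < s)%N -> (s.+2 <= t)%N -> (t < T)%N -> k.+1 = s \/ k.+1 = t ->
  let C := [set om | y s.-1 om = dv /\ y t.-1 om = dv /\
                     y s.+1 om = b /\ y t.+1 om = b] in
  [/\ C `<=` Y k dv, C `<=` Y k.+2 b & G_trace (Y k.+2 b) C].
Proof.
move=> s_gt0 st tT kst C; split.
- by move=> om [ys [yt _]]; case: kst => kE; [move: ys|move: yt]; rewrite -kE.
- by move=> om [_ [_ [ys yt]]]; case: kst => kE; [move: ys|move: yt]; rewrite -kE.
- have -> : C = Y s.-1 dv `&` (Y t.-1 dv `&` (Y s.+1 b `&` Y t.+1 b)) by [].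
  by repeat apply: G_traceI; apply: G_trace_Y; lia.
Qed.

Lemma condP_neighbours s t dv :
  (0 < s)%N -> (s.+2 <= t)%N -> (t < T)%N -> k.+1 = s \/ k.+1 = t ->
  let C b := [set om | y s.-1 om = dv /\ y t.-1 om = dv /\
                       y s.+1 om = b /\ y t.+1 om = b] in
  condP P (Y k.+1 true) (C true) =
    F (w k.+1 + gamma * dv%:R + alpha) *
      condP P (E1 w gamma alpha eps k.+2) (C true) /\
  condP P (Y k.+1 true) (C false) = condP P (E2 w gamma alpha eps k.+2) (C false) +
    F (w k.+1 + gamma * dv%:R + alpha) *
      condP P (E3 w gamma alpha eps k.+2) (C false).
Proof.
move=> s_gt0 st tT kst C; split.
- have [CY CY2 trC] := neighbours_trace dv true s_gt0 st tT kst.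
  exact: condP_Y_E1 CY CY2 trC.
- have [CY CY2 trC] := neighbours_trace dv false s_gt0 st tT kst.
  exact: condP_Y_E2E3 CY CY2 trC.
Qed.

End at_time.
End model.

Theorem lemma1 (R : realType) (dm : measure_display) (Omega : measurableType dm)
  (P : probability Omega R)
  (T K : nat) (x : nat -> 'I_K -> R) (beta : 'I_K -> R) (gamma alpha : R)
  (F : R -> R) (eps : nat -> Omega -> R) (y0 : Omega -> bool)
  (s t : nat) :
  (* model restrictions: ||beta||_2 = 1 (A(e)), gamma < 0 *)
  \sum_(i < K) beta i ^+ 2 = 1 ->
  gamma < 0 ->
  (* measurability *)
  measurable_fun setT y0 ->
  (forall u, (1 <= u <= T)%N -> measurable_fun setT (eps u)) ->
  (* Assumption A(a), conditional on alpha and x^T: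
     (y_0, eps_1, ..., eps_T) mutually independent *)
  mutually_independent P
    (fun i : 'I_T.+1 => if val i == 0%N then (fun om => (y0 om)%:R) else eps (val i)) ->
  (* eps_1, ..., eps_T identically distributed with common CDF F *)
  (forall u, (1 <= u <= T)%N -> forall c, P (eps u @^-1` `]-oo, c]) = (F c)%:E) ->
  (* Assumption A(b) *)
  abs_cont_cdf F -> full_support_cdf F ->
  (* indices *)
  (1 <= s)%N -> (s.+2 <= t)%N -> (t.+1 <= T)%N ->
  let w := index_w x beta in
  let y := ydyn w gamma alpha eps y0 in
  forall (dv : bool) (tau : nat), (tau = s \/ tau = t) ->
    let C1 := [set om | y s.-1 om = dv /\ y t.-1 om = dv /\
                        y s.+1 om = true /\ y t.+1 om = true] in
    let C0 := [set om | y s.-1 om = dv /\ y t.-1 om = dv /\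
                        y s.+1 om = false /\ y t.+1 om = false] in
    condP P [set om | y tau om = true] C1 =
      F (w tau + gamma * dv%:R + alpha) * condP P (E1 w gamma alpha eps tau.+1) C1
    /\
    condP P [set om | y tau om = true] C0 =
      condP P (E2 w gamma alpha eps tau.+1) C0 +
      F (w tau + gamma * dv%:R + alpha) * condP P (E3 w gamma alpha eps tau.+1) C0.
Proof.
move=> _ gamma_lt0 my0 meps indepZ cdf_eps acF _ s_gt0 st tT w y dv tau tau_st.
move=> C1 C0.
have [k tauE] : exists k, tau = k.+1 by exists tau.-1; case: tau_st => ->; lia.
subst tau; have k2T : (k.+2 <= T)%N by case: tau_st => ->; lia.
exact: (condP_neighbours w alpha gamma_lt0 my0 meps indepZ cdf_eps acF k2T dv
  s_gt0 st tT tau_st).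
Qed.
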